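(* Let $f(x)=\sum_{k=0}^{\infty}x^ka_k$, $a_k\in\mathbb{O}$, be a slice regular function on $\mathbb{B}$ such that $f(\mathbb{B})\subset\Pi:=\{x\in\mathbb{O}:\mathrm{Re}(x)\le1\}$, and assume $a_0=f(0)$ is real with $a_0\in[0,1)$. Then $$\mathcal{E}_f(x):=\sum_{k=0}^{\infty}|x^ka_k|+\left(\frac{1}{1+a_0}+\frac{|x|}{1-|x|}\right)\sum_{k=1}^{\infty}|x^ka_k|^2\le1$$ for all $x\in\mathbb{B}$ with $|x|\le R_*$, where $R_*\approx0.24683$ is the unique root in $(0,1)$ of $3r^3-5r^2-3r+1=0$. The constant $R_*$ cannot be improved: for every $r\in(R_*,1)$ there exist such an $f$ and $x$ with $|x|=r$ and $\mathcal{E}_f(x)>1$.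
   Context: $\mathbb{O}$ denotes the real algebra of octonions (the 8-dimensional non-commutative, non-associative but alternative normed division algebra over $\mathbb{R}$), with modulus $|x|=\sqrt{x\overline{x}}$ equal to the Euclidean norm on $\mathbb{R}^8$; the modulus is multiplicative, $|xy|=|x||y|$. For $x\in\mathbb{O}$, $\mathrm{Re}(x)=(x+\overline{x})/2$. $\mathbb{B}=\{x\in\mathbb{O}:|x|<1\}$ is the open unit ball. A slice regular function on $\mathbb{B}$ is (equivalently) a function of the form $f(x)=\sum_{k=0}^{\infty}x^ka_k$ with coefficients $a_k\in\mathbb{O}$ placed on the right, the series converging for every $x\in\mathbb{B}$ (the powers $x^k$ are unambiguous since $\mathbb{O}$ is alternative). *)

From Stdlib Require Import Reals Lra.
From Coquelicot Require Import Coquelicot.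
Open Scope R_scope.

Record quat := Quat { q0 : R; q1 : R; q2 : R; q3 : R }.

Definition qadd (a b : quat) : quat :=
  Quat (q0 a + q0 b) (q1 a + q1 b) (q2 a + q2 b) (q3 a + q3 b).
Definition qopp (a : quat) : quat := Quat (- q0 a) (- q1 a) (- q2 a) (- q3 a).
Definition qsub (a b : quat) : quat := qadd a (qopp b).
Definition qconj (a : quat) : quat := Quat (q0 a) (- q1 a) (- q2 a) (- q3 a).
Definition qmul (a b : quat) : quat :=
  Quat (q0 a * q0 b - q1 a * q1 b - q2 a * q2 b - q3 a * q3 b)
       (q0 a * q1 b + q1 a * q0 b + q2 a * q3 b - q3 a * q2 b)
       (q0 a * q2 b - q1 a * q3 b + q2 a * q0 b + q3 a * q1 b)
       (q0 a * q3 b + q1 a * q2 b - q2 a * q1 b + q3 a * q0 b).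
Definition qzero : quat := Quat 0 0 0 0.
Definition qreal (r : R) : quat := Quat r 0 0 0.

(** * Octonions, via the Cayley–Dickson construction on quaternions:
    (a,b)(c,d) = (a c - conj(d) b, d a + b conj(c)). *)
Record oct := Oct { olo : quat; ohi : quat }.

Definition omul (x y : oct) : oct :=
  Oct (qsub (qmul (olo x) (olo y)) (qmul (qconj (ohi y)) (ohi x)))
      (qadd (qmul (ohi y) (olo x)) (qmul (ohi x) (qconj (olo y)))).
Definition oadd (x y : oct) : oct := Oct (qadd (olo x) (olo y)) (qadd (ohi x) (ohi y)).
Definition oconj (x : oct) : oct := Oct (qconj (olo x)) (qopp (ohi x)).
Definition oreal (r : R) : oct := Oct (qreal r) qzero.
Definition oone : oct := oreal 1.

Definition ocoord (x : oct) (i : nat) : R :=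
  match i with
  | 0 => q0 (olo x) | 1 => q1 (olo x) | 2 => q2 (olo x) | 3 => q3 (olo x)
  | 4 => q0 (ohi x) | 5 => q1 (ohi x) | 6 => q2 (ohi x) | _ => q3 (ohi x)
  end.

Definition onorm (x : oct) : R :=
  sqrt (q0 (olo x)^2 + q1 (olo x)^2 + q2 (olo x)^2 + q3 (olo x)^2
      + q0 (ohi x)^2 + q1 (ohi x)^2 + q2 (ohi x)^2 + q3 (ohi x)^2).

Definition oRe (x : oct) : R := q0 (olo (oadd x (oconj x))) / 2.

(** Powers x^k (unambiguous by alternativity). *)
Fixpoint opow (x : oct) (k : nat) : oct :=
  match k with O => oone | S k' => omul x (opow x k') end.

Definition oseries_conv (u : nat -> oct) : Prop :=
  forall i : nat, (i < 8)%nat -> ex_series (fun k => ocoord (u k) i).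
Definition oSeries (u : nat -> oct) : oct :=
  Oct (Quat (Series (fun k => ocoord (u k) 0)) (Series (fun k => ocoord (u k) 1))
            (Series (fun k => ocoord (u k) 2)) (Series (fun k => ocoord (u k) 3)))
      (Quat (Series (fun k => ocoord (u k) 4)) (Series (fun k => ocoord (u k) 5))
            (Series (fun k => ocoord (u k) 6)) (Series (fun k => ocoord (u k) 7))).

Definition term (a : nat -> oct) (x : oct) (k : nat) : oct := omul (opow x k) (a k).

Definition slice_regular_ball (a : nat -> oct) : Prop :=
  forall x : oct, onorm x < 1 -> oseries_conv (term a x).

Definition sfun (a : nat -> oct) (x : oct) : oct := oSeries (term a x).

Definition maps_into_Pi (a : nat -> oct) : Prop :=
  forall x : oct, onorm x < 1 -> oRe (sfun a x) <= 1.

(** E_f(x), as an extended real: limit of the nondecreasing partial sums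
    (= +oo if one of the nonnegative series diverges). *)
Definition Ef (a : nat -> oct) (a0 : R) (x : oct) : Rbar :=
  Lim_seq (fun N =>
    sum_f_R0 (fun k => onorm (term a x k)) N
    + (1 / (1 + a0) + onorm x / (1 - onorm x))
      * sum_f_R0 (fun k => (onorm (term a x (S k)))^2) N).

(* For a unit imaginary [u] and [x = r (cos t + u sin t)] one has
   [x^m = r^m (cos (m t) + u sin (m t))], so on the circle of radius [r] of the slice
   [R + R u] the real part of [f] is the trigonometric series with coefficients
   [r^m Re a_m] and [r^m Re (u a_m)]; for a suitable [u] the [k]-th pair has norm [r^k |a_k|].
   Carathéodory's inequality for trigonometric series bounded above by 1 then gives
   [|a_k| <= 2 (1 - a_0)]. It is obtained by averaging [1 - Re f >= 0] against the weight
   [1 + cos (k t - phi)] over [N] equidistant nodes, which is exact on the harmonics below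
   [N - k], and letting [N] grow.
   Summing geometric series, [E_f(x) <= a_0 + (1 - a_0) G(|x|)] with
   [G(r) = 2r/(1-r) + 4r^2/((1-r)(1-r^2))], and [G(r) <= 1] exactly when
   [3r^3 - 5r^2 - 3r + 1 >= 0]. The function [f(x) = -2x(1-x)^-1] has [Re f <= 1] on the ball
   and [E_f(r) = G(r)], so the radius cannot be improved. *)

From Stdlib Require Import Reals Lra Lia.
From Coquelicot Require Import Coquelicot.
Open Scope R_scope.

(** * Octonion modulus and slices *)

Definition osq (x : oct) : R :=
  q0 (olo x)^2 + q1 (olo x)^2 + q2 (olo x)^2 + q3 (olo x)^2
  + q0 (ohi x)^2 + q1 (ohi x)^2 + q2 (ohi x)^2 + q3 (ohi x)^2.

Definition oscal (s : R) (x : oct) : oct :=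
  Oct (Quat (s * q0 (olo x)) (s * q1 (olo x)) (s * q2 (olo x)) (s * q3 (olo x)))
      (Quat (s * q0 (ohi x)) (s * q1 (ohi x)) (s * q2 (ohi x)) (s * q3 (ohi x))).

(* [c + s u]; for a unit imaginary [u] these points form the slice through [u], a copy of
   the complex plane on which [f] is a power series in one complex variable. *)
Definition oslice (c s : R) (u : oct) : oct := oadd (oreal c) (oscal s u).

Ltac oct_simpl :=
  cbv beta iota delta [oone oreal oslice oscal oadd omul osq ocoord qsub qadd qopp
    qmul qconj qreal qzero olo ohi q0 q1 q2 q3] in *.

Ltac oct_destruct x :=
  let a0 := fresh "a" in let a1 := fresh "a" in let a2 := fresh "a" in
  let a3 := fresh "a" in let a4 := fresh "a" in let a5 := fresh "a" in
  let a6 := fresh "a" in let a7 := fresh "a" in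
  destruct x as [[a0 a1 a2 a3] [a4 a5 a6 a7]].

Lemma osq_ge0 (x : oct) : 0 <= osq x.
Proof. unfold osq; nra. Qed.

Lemma onorm_ge0 (x : oct) : 0 <= onorm x.
Proof. apply sqrt_pos. Qed.

Lemma osq_mul (x y : oct) : osq (omul x y) = osq x * osq y.
Proof. oct_destruct x; oct_destruct y; oct_simpl; ring. Qed.

Lemma onorm_mul (x y : oct) : onorm (omul x y) = onorm x * onorm y.
Proof.
  unfold onorm; fold (osq (omul x y)) (osq x) (osq y).
  rewrite osq_mul; apply sqrt_mult; apply osq_ge0.
Qed.

Lemma onorm_osq (x : oct) : onorm x = sqrt (osq x).
Proof. reflexivity. Qed.

Lemma onorm_oreal (c : R) : onorm (oreal c) = Rabs c.
Proof.
  rewrite onorm_osq, <- sqrt_Rsqr_abs; unfold Rsqr; f_equal; oct_simpl; ring.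
Qed.

Lemma onorm_opow (x : oct) (k : nat) : onorm (opow x k) = onorm x ^ k.
Proof.
  induction k as [|k IH]; simpl.
  - unfold oone; rewrite onorm_oreal; apply Rabs_R1.
  - rewrite onorm_mul, IH; reflexivity.
Qed.

Lemma onorm_term (a : nat -> oct) (x : oct) (k : nat) :
  onorm (term a x k) = onorm x ^ k * onorm (a k).
Proof. unfold term; rewrite onorm_mul, onorm_opow; reflexivity. Qed.

Lemma Rabs_ocoord_le_onorm (x : oct) (i : nat) : Rabs (ocoord x i) <= onorm x.
Proof.
  rewrite onorm_osq, <- sqrt_Rsqr_abs; apply sqrt_le_1_alt.
  oct_destruct x; unfold Rsqr; oct_simpl.
  destruct i as [|[|[|[|[|[|[|i]]]]]]]; nra.
Qed.

Lemma onorm_le_sum_Rabs_ocoord (x : oct) :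
  onorm x <= sum_f_R0 (fun i => Rabs (ocoord x i)) 7.
Proof.
  assert (Hsum : 0 <= sum_f_R0 (fun i => Rabs (ocoord x i)) 7)
    by (apply cond_pos_sum; intro; apply Rabs_pos).
  rewrite onorm_osq, <- (sqrt_Rsqr _ Hsum); apply sqrt_le_1_alt.
  destruct x as [[x0 x1 x2 x3] [x4 x5 x6 x7]]; unfold Rsqr; simpl; oct_simpl.
  rewrite <- (pow2_abs x0), <- (pow2_abs x1), <- (pow2_abs x2), <- (pow2_abs x3),
    <- (pow2_abs x4), <- (pow2_abs x5), <- (pow2_abs x6), <- (pow2_abs x7).
  generalize (Rabs_pos x0) (Rabs_pos x1) (Rabs_pos x2) (Rabs_pos x3)
    (Rabs_pos x4) (Rabs_pos x5) (Rabs_pos x6) (Rabs_pos x7); nra.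
Qed.

Lemma ocoord_oscal (c : R) (y : oct) (i : nat) : ocoord (oscal c y) i = c * ocoord y i.
Proof. destruct i as [|[|[|[|[|[|[|i]]]]]]]; reflexivity. Qed.

Lemma omul_oreal_l (c : R) (y : oct) : omul (oreal c) y = oscal c y.
Proof. oct_destruct y; oct_simpl; f_equal; f_equal; ring. Qed.

Lemma omul_oreal_r (y : oct) (c : R) : omul y (oreal c) = oscal c y.
Proof. oct_destruct y; oct_simpl; f_equal; f_equal; ring. Qed.

Lemma opow_oreal (c : R) (k : nat) : opow (oreal c) k = oreal (c ^ k).
Proof.
  induction k as [|k IH]; [reflexivity|].
  simpl opow; rewrite IH; oct_simpl; f_equal; f_equal; simpl; ring.
Qed.

Lemma oRe_sfun (a : nat -> oct) (x : oct) :
  oRe (sfun a x) = Series (fun m => ocoord (term a x m) 0).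
Proof. unfold oRe, sfun, oSeries; simpl; field. Qed.

Lemma oslice_mul (c s c' s' : R) (u : oct) : q0 (olo u) = 0 ->
  omul (oslice c s u) (oslice c' s' u) = oslice (c * c' - s * s' * osq u) (c * s' + s * c') u.
Proof.
  destruct u as [[u0 u1 u2 u3] [u4 u5 u6 u7]]; simpl; intros ->.
  oct_simpl; f_equal; f_equal; ring.
Qed.

Lemma osq_oslice (c s : R) (u : oct) : q0 (olo u) = 0 ->
  osq (oslice c s u) = c ^ 2 + s ^ 2 * osq u.
Proof.
  destruct u as [[u0 u1 u2 u3] [u4 u5 u6 u7]]; simpl; intros ->.
  oct_simpl; ring.
Qed.

Lemma opow_oslice_polar (r t : R) (u : oct) (m : nat) : q0 (olo u) = 0 -> osq u = 1 ->
  opow (oslice (r * cos t) (r * sin t) u) m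
  = oslice (r ^ m * cos (INR m * t)) (r ^ m * sin (INR m * t)) u.
Proof.
  intros Hu0 Hu1; induction m as [|m IH].
  - simpl; rewrite Rmult_0_l, cos_0, sin_0.
    oct_destruct u; oct_simpl; f_equal; f_equal; ring.
  - simpl opow; rewrite IH, oslice_mul, Hu1, S_INR by exact Hu0.
    rewrite Rmult_plus_distr_r, Rmult_1_l, cos_plus, sin_plus; f_equal; simpl; ring.
Qed.

Lemma onorm_oslice_polar (r t : R) (u : oct) : 0 <= r -> q0 (olo u) = 0 -> osq u = 1 ->
  onorm (oslice (r * cos t) (r * sin t) u) = r.
Proof.
  intros Hr Hu0 Hu1; rewrite onorm_osq, osq_oslice, Hu1 by exact Hu0.
  replace ((r * cos t) ^ 2 + (r * sin t) ^ 2 * 1) with (r ^ 2 * (sin t ^ 2 + cos t ^ 2)) by ring.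
  rewrite <- (Rsqr_pow2 (sin t)), <- (Rsqr_pow2 (cos t)), sin2_cos2, Rmult_1_r.
  apply sqrt_pow2, Hr.
Qed.

Lemma ocoord0_oslice_mul (c s : R) (u a : oct) :
  ocoord (omul (oslice c s u) a) 0 = c * ocoord a 0 + s * ocoord (omul u a) 0.
Proof. oct_destruct u; oct_destruct a; oct_simpl; ring. Qed.

(* The unit imaginary [u] is [-Im a / |Im a|], which turns [Re (u a)] into [|Im a|]. *)
Lemma exists_unit_imaginary_Re (a : oct) : exists u : oct,
  q0 (olo u) = 0 /\ osq u = 1 /\ ocoord a 0 ^ 2 + ocoord (omul u a) 0 ^ 2 = osq a.
Proof.
  destruct a as [[a0 a1 a2 a3] [a4 a5 a6 a7]].
  set (S2 := a1^2 + a2^2 + a3^2 + a4^2 + a5^2 + a6^2 + a7^2).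
  assert (HS2 : 0 <= S2) by (unfold S2; nra).
  set (n := sqrt S2).
  assert (Hn : n * n = S2) by (apply sqrt_sqrt, HS2).
  destruct (Req_dec n 0) as [Hn0|Hn0].
  - exists (Oct (Quat 0 1 0 0) qzero).
    assert (a1 = 0 /\ a2 = 0 /\ a3 = 0 /\ a4 = 0 /\ a5 = 0 /\ a6 = 0 /\ a7 = 0)
      as (-> & -> & -> & -> & -> & -> & ->) by (unfold S2 in Hn; repeat split; nra).
    oct_simpl; repeat split; ring.
  - set (u := Oct (Quat 0 (-a1/n) (-a2/n) (-a3/n)) (Quat (-a4/n) (-a5/n) (-a6/n) (-a7/n))).
    exists u.
    assert (Hre : ocoord (omul u (Oct (Quat a0 a1 a2 a3) (Quat a4 a5 a6 a7))) 0 = n).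
    { unfold u; oct_simpl; apply (Rmult_eq_reg_r n); [|exact Hn0].
      rewrite Hn; field_simplify; [reflexivity | exact Hn0]. }
    rewrite Hre; unfold u; oct_simpl; repeat split.
    + assert (S2 <> 0) by (rewrite <- Hn; now apply Rmult_integral_contrapositive).
      transitivity (S2 / (n * n)); [unfold S2; field; exact Hn0|].
      rewrite Hn; field; assumption.
    + replace (n ^ 2) with S2 by (rewrite <- Hn; ring); unfold S2; ring.
Qed.

(** * Discrete Fourier analysis on the circle *)

Lemma sin_period_Z (x : R) (p : Z) : sin (x + 2 * IZR p * PI) = sin x.
Proof.
  apply Rminus_diag_uniq; rewrite form4.
  replace ((x + 2 * IZR p * PI - x) / 2) with (IZR p * PI) by field.
  rewrite sin_eq_0_1 by (exists p; reflexivity); ring.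
Qed.

Lemma sum_f_R0_telescope (f : nat -> R) (n : nat) :
  sum_f_R0 (fun j => f (S j) - f j) n = f (S n) - f O.
Proof. induction n as [|n IH]; simpl; [|rewrite IH]; ring. Qed.

Lemma sum_f_R0_scal_l (f : nat -> R) (c : R) (n : nat) :
  sum_f_R0 (fun j => c * f j) n = c * sum_f_R0 f n.
Proof. induction n as [|n IH]; simpl; [|rewrite IH]; ring. Qed.

Lemma not_divide_small (N : nat) (p : Z) :
  (0 < Z.abs p < Z.of_nat N)%Z -> ~ (Z.of_nat N | p)%Z.
Proof.
  intros Hp Hdiv; apply Z.divide_abs_r, Z.divide_pos_le in Hdiv; lia.
Qed.

Definition node (N j : nat) : R := 2 * PI * INR j / INR N.

(* Multiplied by [2 sin (al / 2)], [al = 2 pi p / N], the sum telescopes. *)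
Lemma sum_cos_nodes (N : nat) (p : Z) (psi : R) : (0 < N)%nat -> ~ (Z.of_nat N | p)%Z ->
  sum_f_R0 (fun j => cos (IZR p * node N j + psi)) (pred N) = 0.
Proof.
  intros HN Hp.
  assert (HNr : INR N <> 0) by (apply not_0_INR; lia).
  set (al := 2 * PI * IZR p / INR N).
  assert (Hsin : sin (al / 2) <> 0).
  { intros [z Hz]%sin_eq_0_0; apply Hp; exists z.
    apply eq_IZR; rewrite mult_IZR, <- INR_IZR_INZ.
    assert (PI <> 0) by (generalize PI_RGT_0; lra).
    replace (IZR p) with (al / 2 * INR N / PI) by (unfold al; field; auto).
    rewrite Hz; field; assumption. }
  apply (Rmult_eq_reg_l (2 * sin (al / 2))); [|lra].
  rewrite Rmult_0_r, <- sum_f_R0_scal_l.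
  set (f := fun j : nat => sin (INR j * al + psi - al / 2)).
  transitivity (sum_f_R0 (fun j => f (S j) - f j) (pred N)).
  - apply sum_eq; intros j _; unfold f; rewrite S_INR.
    replace (IZR p * node N j) with (INR j * al) by (unfold node, al; field; auto).
    replace ((INR j + 1) * al + psi - al / 2) with ((INR j * al + psi) + al / 2) by field.
    rewrite sin_plus, sin_minus; ring.
  - rewrite sum_f_R0_telescope; unfold f; replace (S (pred N)) with N by lia.
    replace (INR N * al + psi - al / 2) with ((0 * al + psi - al / 2) + 2 * IZR p * PI)
      by (unfold al; field; auto).
    rewrite sin_period_Z; simpl; ring.
Qed.

Definition cos_sum (t : nat -> R) (n : nat) (p : Z) : R :=
  sum_f_R0 (fun j => cos (IZR p * t j)) n.
Definition sin_sum (t : nat -> R) (n : nat) (p : Z) : R :=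
  sum_f_R0 (fun j => sin (IZR p * t j)) n.

Lemma cos_sum_sin_sum_nodes (N : nat) (p : Z) : (0 < N)%nat -> ~ (Z.of_nat N | p)%Z ->
  cos_sum (node N) (pred N) p = 0 /\ sin_sum (node N) (pred N) p = 0.
Proof.
  intros HN Hp; split.
  - rewrite <- (sum_cos_nodes N p 0 HN Hp); apply sum_eq; intros; rewrite Rplus_0_r; reflexivity.
  - rewrite <- (sum_cos_nodes N p (- (PI / 2)) HN Hp); apply sum_eq; intros.
    rewrite cos_plus, cos_neg, sin_neg, cos_PI2, sin_PI2; ring.
Qed.

Lemma cos_sum_0 (t : nat -> R) (n : nat) : cos_sum t n 0 = INR (S n).
Proof.
  unfold cos_sum; rewrite (sum_eq _ (fun _ => 1)), sum_cte; [ring|].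
  intros; rewrite Rmult_0_l; apply cos_0.
Qed.

Lemma sin_sum_0 (t : nat -> R) (n : nat) : sin_sum t n 0 = 0.
Proof.
  unfold sin_sum; rewrite (sum_eq _ (fun _ => 0)), sum_cte; [ring|].
  intros; rewrite Rmult_0_l; apply sin_0.
Qed.

Definition harmonic (A B : R) (m : nat) (x : R) : R := A * cos (INR m * x) + B * sin (INR m * x).

Lemma Rabs_harmonic_le (A B : R) (m : nat) (x : R) : Rabs (harmonic A B m x) <= Rabs A + Rabs B.
Proof.
  unfold harmonic; eapply Rle_trans; [apply Rabs_triang|]; rewrite !Rabs_mult.
  assert (Rabs (cos (INR m * x)) <= 1) by (apply Rabs_le, COS_bound).
  assert (Rabs (sin (INR m * x)) <= 1) by (apply Rabs_le, SIN_bound).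
  generalize (Rabs_pos A) (Rabs_pos B) (Rabs_pos (cos (INR m * x))) (Rabs_pos (sin (INR m * x))).
  nra.
Qed.

Lemma harmonic_weight_bounds (al be : R) (k : nat) (x : R) : al ^ 2 + be ^ 2 <= 1 ->
  0 <= 1 + harmonic al be k x <= 2.
Proof.
  intros Hab; unfold harmonic.
  set (c := cos (INR k * x)); set (s := sin (INR k * x)).
  assert (Hcs : c ^ 2 + s ^ 2 = 1) by (rewrite <- (sin2_cos2 (INR k * x)); unfold c, s, Rsqr; ring).
  assert (Hcauchy : (al * c + be * s) ^ 2 + (al * s - be * c) ^ 2 = (al ^ 2 + be ^ 2) * (c ^ 2 + s ^ 2))
    by ring.
  rewrite Hcs, Rmult_1_r in Hcauchy.
  assert (Hsq : (al * c + be * s) ^ 2 <= 1) by (generalize (pow2_ge_0 (al * s - be * c)); lra).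
  revert Hsq; generalize (al * c + be * s); intros X HX; split; nra.
Qed.

Definition weighted_harmonic_sum (t : nat -> R) (n : nat) (al be : R) (k : nat)
    (A B : R) (m : nat) : R :=
  sum_f_R0 (fun j => harmonic A B m (t j) * (1 + harmonic al be k (t j))) n.

Lemma weighted_harmonic_sum_expand (t : nat -> R) (n : nat) (al be : R) (k : nat)
    (A B : R) (m : nat) :
  let zm := Z.of_nat m in let zk := Z.of_nat k in
  weighted_harmonic_sum t n al be k A B m =
  A * cos_sum t n zm + B * sin_sum t n zm
  + al * A / 2 * (cos_sum t n (zm + zk) + cos_sum t n (zm - zk))
  + be * A / 2 * (sin_sum t n (zm + zk) - sin_sum t n (zm - zk))
  + al * B / 2 * (sin_sum t n (zm + zk) + sin_sum t n (zm - zk))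
  + be * B / 2 * (cos_sum t n (zm - zk) - cos_sum t n (zm + zk)).
Proof.
  intros zm zk; subst zm zk; unfold weighted_harmonic_sum, harmonic, cos_sum, sin_sum.
  induction n as [|n IH]; simpl; [|rewrite IH];
    rewrite plus_IZR, minus_IZR, <- !INR_IZR_INZ, !Rmult_plus_distr_r, !Rmult_minus_distr_r,
      ?cos_plus, ?cos_minus, ?sin_plus, ?sin_minus; field.
Qed.

Lemma Rabs_weighted_harmonic_sum_le (t : nat -> R) (n : nat) (al be : R) (k : nat)
    (A B : R) (m : nat) : al ^ 2 + be ^ 2 <= 1 ->
  Rabs (weighted_harmonic_sum t n al be k A B m) <= 2 * INR (S n) * (Rabs A + Rabs B).
Proof.
  intros Hab; unfold weighted_harmonic_sum.
  eapply Rle_trans; [apply sum_f_R0_triangle|].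
  replace (2 * INR (S n) * (Rabs A + Rabs B))
    with (sum_f_R0 (fun _ => 2 * (Rabs A + Rabs B)) n) by (rewrite sum_cte; ring).
  apply sum_Rle; intros j _; rewrite Rabs_mult.
  destruct (harmonic_weight_bounds al be k (t j) Hab) as [Hw0 Hw2].
  rewrite (Rabs_pos_eq (1 + _)) by exact Hw0.
  generalize (Rabs_harmonic_le A B m (t j)) (Rabs_pos (harmonic A B m (t j))); nra.
Qed.

Lemma sum_f_R0_eq_first (g : nat -> R) (n : nat) :
  (forall m, (0 < m <= n)%nat -> g m = 0) -> sum_f_R0 g n = g O.
Proof.
  induction n as [|n IH]; intros Hg; simpl; [reflexivity|].
  rewrite IH, (Hg (S n)) by (lia || (intros; apply Hg; lia)); ring.
Qed.

Lemma sum_f_R0_two_terms (g : nat -> R) (n k : nat) : (0 < k <= n)%nat ->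
  (forall m, (0 < m <= n)%nat -> m <> k -> g m = 0) -> sum_f_R0 g n = g O + g k.
Proof.
  induction n as [|n IH]; intros Hk Hg; [lia|]; simpl.
  destruct (Nat.eq_dec k (S n)) as [->|Hne].
  - rewrite sum_f_R0_eq_first; [reflexivity|]; intros; apply Hg; lia.
  - rewrite IH, (Hg (S n)); [ring | lia | lia | lia |]; intros; apply Hg; lia.
Qed.

Lemma cos_sum_sin_sum_nodes_small (N : nat) (p : Z) : (0 < Z.abs p < Z.of_nat N)%Z ->
  cos_sum (node N) (pred N) p = 0 /\ sin_sum (node N) (pred N) p = 0.
Proof. intros; apply cos_sum_sin_sum_nodes, not_divide_small; lia. Qed.

Lemma INR_S_pred (N : nat) : (0 < N)%nat -> INR (S (pred N)) = INR N.
Proof. intros; f_equal; lia. Qed.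

Section Nodes.
Variables (N k : nat) (al be : R).
Hypothesis (Hk : (0 < k)%nat) (HkN : (2 * k < N)%nat).

Lemma sum_weight_nodes : sum_f_R0 (fun j => 1 + harmonic al be k (node N j)) (pred N) = INR N.
Proof.
  transitivity (weighted_harmonic_sum (node N) (pred N) al be k 1 0 0).
  - apply sum_eq; intros j _; unfold harmonic; simpl INR; rewrite Rmult_0_l, cos_0, sin_0; ring.
  - rewrite weighted_harmonic_sum_expand; simpl Z.of_nat.
    destruct (cos_sum_sin_sum_nodes_small N (0 + Z.of_nat k)) as [-> ->]; [lia|].
    destruct (cos_sum_sin_sum_nodes_small N (0 - Z.of_nat k)) as [-> ->]; [lia|].
    rewrite cos_sum_0, sin_sum_0, INR_S_pred by lia; ring.
Qed.

(* Only the harmonics [0] and [k] survive below the aliasing threshold [N - k]. *)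
Lemma sum_weighted_harmonic_sum_nodes (A B : nat -> R) :
  sum_f_R0 (fun m => weighted_harmonic_sum (node N) (pred N) al be k (A m) (B m) m) (N - k - 1)
  = INR N * A O + INR N / 2 * (al * A k + be * B k).
Proof.
  rewrite (sum_f_R0_two_terms _ _ k); [f_equal | lia |].
  - rewrite weighted_harmonic_sum_expand; simpl Z.of_nat.
    destruct (cos_sum_sin_sum_nodes_small N (0 + Z.of_nat k)) as [-> ->]; [lia|].
    destruct (cos_sum_sin_sum_nodes_small N (0 - Z.of_nat k)) as [-> ->]; [lia|].
    rewrite cos_sum_0, sin_sum_0, INR_S_pred by lia; ring.
  - rewrite weighted_harmonic_sum_expand, Z.sub_diag.
    destruct (cos_sum_sin_sum_nodes_small N (Z.of_nat k)) as [-> ->]; [lia|].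
    destruct (cos_sum_sin_sum_nodes_small N (Z.of_nat k + Z.of_nat k)) as [-> ->]; [lia|].
    rewrite cos_sum_0, sin_sum_0, INR_S_pred by lia; field.
  - intros m Hm Hmk; rewrite weighted_harmonic_sum_expand.
    destruct (cos_sum_sin_sum_nodes_small N (Z.of_nat m)) as [-> ->]; [lia|].
    destruct (cos_sum_sin_sum_nodes_small N (Z.of_nat m + Z.of_nat k)) as [-> ->]; [lia|].
    destruct (cos_sum_sin_sum_nodes_small N (Z.of_nat m - Z.of_nat k)) as [-> ->]; [lia|].
    ring.
Qed.

End Nodes.

(** * Carathéodory's inequality for trigonometric series *)

Lemma ex_series_sum_f_R0 (g : nat -> nat -> R) (n : nat) :
  (forall j, (j <= n)%nat -> ex_series (g j)) ->
  ex_series (fun m => sum_f_R0 (fun j => g j m) n).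
Proof.
  intros Hg; induction n as [|n IH]; [apply Hg; lia|].
  apply (ex_series_plus (fun m => sum_f_R0 (fun j => g j m) n));
    [apply IH; intros; apply Hg | apply Hg]; lia.
Qed.

Lemma Series_sum_f_R0 (g : nat -> nat -> R) (n : nat) : (forall j, ex_series (g j)) ->
  sum_f_R0 (fun j => Series (g j)) n = Series (fun m => sum_f_R0 (fun j => g j m) n).
Proof.
  intros Hg; induction n as [|n IH]; [reflexivity|].
  simpl; rewrite IH, Series_plus;
    [reflexivity | apply ex_series_sum_f_R0; intros; apply Hg | apply Hg].
Qed.

Lemma Series_ge_opp (a b : nat -> R) : (forall m, Rabs (a m) <= b m) -> ex_series b ->
  - Series b <= Series a.
Proof.
  intros Hab Hb.
  assert (Habs : ex_series (fun m => Rabs (a m))).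
  { apply (ex_series_le (fun m => Rabs (a m)) b); [intros m; rewrite Rabs_Rabsolu; apply Hab | exact Hb]. }
  assert (H : Rabs (Series a) <= Series b).
  { eapply Rle_trans; [apply Series_Rabs, Habs|].
    apply Series_le; [intros m; split; [apply Rabs_pos | apply Hab] | exact Hb]. }
  apply Rabs_le_between in H; lra.
Qed.

Lemma Series_tail_lim (a : nat -> R) : ex_series a ->
  is_lim_seq (fun n => Series (fun m => a (n + m)%nat)) 0.
Proof.
  intros Ha; apply is_lim_seq_incr_1.
  apply (is_lim_seq_ext (fun n => Series a - sum_f_R0 a n)).
  { intros n; rewrite (Series_incr_n a (S n)) by (lia || exact Ha); simpl; ring. }
  replace (Finite 0) with (Rbar_minus (Series a) (Series a)) by (simpl; f_equal; ring).
  apply is_lim_seq_minus'; [apply is_lim_seq_const|].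
  apply (is_lim_seq_ext (sum_n a)); [intros; apply sum_n_Reals|].
  apply Series_correct, Ha.
Qed.

Section TrigSeries.
Variables A B : nat -> R.
Let D (m : nat) : R := Rabs (A m) + Rabs (B m).
Let U (t : R) : R := Series (fun m => harmonic (A m) (B m) m t).
Hypothesis (HD : ex_series D) (HU : forall t, U t <= 1).

Lemma ex_series_harmonic (t : R) : ex_series (fun m => harmonic (A m) (B m) m t).
Proof. apply (ex_series_le (fun m => harmonic (A m) (B m) m t) D); [intros; apply Rabs_harmonic_le | exact HD]. Qed.

Lemma sum_nodes_Series_harmonic (N k : nat) (al be : R) :
  sum_f_R0 (fun j => U (node N j) * (1 + harmonic al be k (node N j))) (pred N)
  = Series (fun m => weighted_harmonic_sum (node N) (pred N) al be k (A m) (B m) m).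
Proof.
  unfold U; rewrite (sum_eq _ (fun j => Series (fun m =>
    harmonic (A m) (B m) m (node N j) * (1 + harmonic al be k (node N j)))))
    by (intros; symmetry; apply Series_scal_r).
  rewrite Series_sum_f_R0; [reflexivity|].
  intros j; apply ex_series_scal_r, ex_series_harmonic.
Qed.

(* Average [1 - U >= 0] against the nonnegative weight [1 + harmonic al be k] over
   [n + k] nodes: the harmonics below [n] contribute exactly [A 0] and the [k]-th pair,
   the others at most twice their size. *)
Lemma caratheodory_discrete (k n : nat) (al be : R) : (0 < k)%nat -> (k < n)%nat ->
  al ^ 2 + be ^ 2 <= 1 ->
  A O + (al * A k + be * B k) / 2 <= 1 + 2 * Series (fun m => D (n + m)%nat).
Proof.
  intros Hk Hkn Hab.
  set (N := (n + k)%nat).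
  assert (HNpos : 0 < INR N) by (apply lt_0_INR; unfold N; lia).
  set (T := fun m => weighted_harmonic_sum (node N) (pred N) al be k (A m) (B m) m).
  assert (HT : forall m, Rabs (T m) <= 2 * INR N * D m).
  { intros m; rewrite <- INR_S_pred by (unfold N; lia).
    apply Rabs_weighted_harmonic_sum_le, Hab. }
  assert (HexT : ex_series T).
  { apply (ex_series_le T (fun m => 2 * INR N * D m)); [exact HT | apply (ex_series_scal_l _ D HD)]. }
  assert (Havg : 0 <= INR N - Series T).
  { rewrite <- (sum_weight_nodes N k al be) by (unfold N; lia).
    unfold T; rewrite <- sum_nodes_Series_harmonic, <- minus_sum.
    apply cond_pos_sum; intros j.
    destruct (harmonic_weight_bounds al be k (node N j) Hab).
    generalize (HU (node N j)); nra. }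
  assert (Hhead : Series T = INR N * A O + INR N / 2 * (al * A k + be * B k)
                             + Series (fun m => T (n + m)%nat)).
  { rewrite (Series_incr_n T n) by (lia || exact HexT).
    replace (pred n) with (N - k - 1)%nat by (unfold N; lia).
    unfold T; rewrite sum_weighted_harmonic_sum_nodes by (unfold N; lia); reflexivity. }
  assert (Htail : - Series (fun m => 2 * INR N * D (n + m)%nat) <= Series (fun m => T (n + m)%nat)).
  { apply Series_ge_opp; [intros; apply HT|].
    apply (ex_series_scal_l _ (fun m => D (n + m)%nat)), (ex_series_incr_n D n), HD. }
  rewrite Series_scal_l in Htail.
  apply (Rmult_le_reg_l (INR N)); [exact HNpos | nra].
Qed.

Lemma caratheodory_coef_bound (k : nat) : (0 < k)%nat ->
  sqrt (A k ^ 2 + B k ^ 2) <= 2 * (1 - A O).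
Proof.
  intros Hk.
  set (rho := sqrt (A k ^ 2 + B k ^ 2)).
  assert (Hrho : rho * rho = A k ^ 2 + B k ^ 2) by (apply sqrt_sqrt; nra).
  assert (Hdir : exists al be, al ^ 2 + be ^ 2 <= 1 /\ al * A k + be * B k = rho).
  { destruct (Req_dec rho 0) as [Hr0|Hr0].
    - exists 0, 0; split; [lra | rewrite Hr0; ring].
    - exists (A k / rho), (B k / rho); split.
      + apply Req_le; field_simplify; [rewrite <- Hrho; field|]; exact Hr0.
      + field_simplify; [rewrite <- Hrho; field|]; exact Hr0. }
  destruct Hdir as (al & be & Hab & Hdir).
  assert (Hlim : Rbar_le (A O + rho / 2) (1 + 2 * 0)).
  { apply (is_lim_seq_le_loc (fun _ => A O + rho / 2) (fun n => 1 + 2 * Series (fun m => D (n + m)%nat))).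
    - exists (S k); intros n Hn; rewrite <- Hdir; apply caratheodory_discrete; [lia | lia | exact Hab].
    - apply is_lim_seq_const.
    - apply is_lim_seq_plus'; [apply is_lim_seq_const|].
      apply (is_lim_seq_scal_l _ 2 0), Series_tail_lim, HD. }
  simpl in Hlim; lra.
Qed.

End TrigSeries.

(** * Coefficients of slice regular functions with values in [Pi] *)

(* Abel's lemma, through the radius of convergence of [sum c m z^m]. *)
Lemma ex_series_pow_Rabs (c : nat -> R) (rho r : R) : 0 <= r < rho ->
  ex_series (fun m => rho ^ m * c m) -> ex_series (fun m => r ^ m * Rabs (c m)).
Proof.
  intros Hr Hs.
  assert (Hlim : is_lim_seq (fun m => c m * rho ^ m) 0).
  { apply (is_lim_seq_ext (fun m => rho ^ m * c m)); [intros; ring | apply ex_series_lim_0, Hs]. }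
  assert (Hrad : Rbar_le (Rabs rho) (CV_radius c)).
  { apply Rbar_not_lt_le; intros H; exact (CV_disk_outside c rho H Hlim). }
  apply (ex_series_ext (fun m => Rabs (c m * r ^ m))).
  - intros m; rewrite Rabs_mult, (Rabs_pos_eq (r ^ m)) by (apply pow_le; lra); apply Rmult_comm.
  - apply CV_disk_inside; eapply Rbar_lt_le_trans; [|exact Hrad].
    simpl; rewrite !Rabs_pos_eq; lra.
Qed.

Lemma ocoord_term_oreal (a : nat -> oct) (rho : R) (m i : nat) :
  ocoord (term a (oreal rho) m) i = rho ^ m * ocoord (a m) i.
Proof. unfold term; rewrite opow_oreal, omul_oreal_l, ocoord_oscal; reflexivity. Qed.

Lemma slice_regular_abs_summable (a : nat -> oct) (r : R) :
  slice_regular_ball a -> 0 <= r < 1 -> ex_series (fun m => r ^ m * onorm (a m)).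
Proof.
  intros Hsr Hr.
  set (rho := (1 + r) / 2).
  assert (Hconv : oseries_conv (term a (oreal rho)))
    by (apply Hsr; rewrite onorm_oreal, Rabs_pos_eq; unfold rho; lra).
  apply (ex_series_le (fun m => r ^ m * onorm (a m))
           (fun m => sum_f_R0 (fun i => r ^ m * Rabs (ocoord (a m) i)) 7)).
  - intros m; change (Rabs (r ^ m * onorm (a m))
      <= sum_f_R0 (fun i => r ^ m * Rabs (ocoord (a m) i)) 7).
    rewrite sum_f_R0_scal_l, Rabs_pos_eq
      by (apply Rmult_le_pos; [apply pow_le; lra | apply onorm_ge0]).
    apply Rmult_le_compat_l; [apply pow_le; lra | apply onorm_le_sum_Rabs_ocoord].
  - apply (ex_series_sum_f_R0 (fun i m => r ^ m * Rabs (ocoord (a m) i))); intros i Hi.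
    apply (ex_series_pow_Rabs _ rho); [unfold rho; lra|].
    apply (ex_series_ext (fun m => ocoord (term a (oreal rho) m) i));
      [intros; apply ocoord_term_oreal | apply Hconv; lia].
Qed.

Lemma pow_1m_ge (d : R) (k : nat) : 0 <= d <= 1 -> 1 - INR k * d <= (1 - d) ^ k.
Proof.
  intros Hd; induction k as [|k IH]; [simpl; lra|].
  rewrite S_INR; simpl; generalize (pos_INR k); nra.
Qed.

Lemma le_of_forall_pow_mul_le (k : nat) (L c : R) : 0 <= c ->
  (forall r, 0 <= r < 1 -> r ^ k * L <= c) -> L <= c.
Proof.
  intros Hc HL; destruct (Rle_lt_dec L c) as [|Hlt]; [assumption|].
  assert (Hk : 0 <= INR k) by apply pos_INR.
  set (d := (L - c) / (2 * (INR k + 1) * L)).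
  assert (Hd : 0 < d <= 1 / 2).
  { unfold d; split; [apply Rdiv_lt_0_compat; nra|].
    apply Rmult_le_reg_r with (2 * (INR k + 1) * L); [nra|].
    field_simplify; nra. }
  assert (Hkd : INR k * d * L <= (L - c) / 2).
  { unfold d; apply Rmult_le_reg_r with (2 * (INR k + 1)); [lra|].
    field_simplify; nra. }
  specialize (HL (1 - d) ltac:(lra)).
  generalize (pow_1m_ge d k ltac:(lra)); nra.
Qed.

Lemma oRe_sfun_oslice_polar (a : nat -> oct) (u : oct) (r t : R) :
  q0 (olo u) = 0 -> osq u = 1 ->
  oRe (sfun a (oslice (r * cos t) (r * sin t) u))
  = Series (fun m => harmonic (r ^ m * ocoord (a m) 0) (r ^ m * ocoord (omul u (a m)) 0) m t).
Proof.
  intros Hu0 Hu1; rewrite oRe_sfun; apply Series_ext; intros m.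
  unfold term, harmonic; rewrite opow_oslice_polar, ocoord0_oslice_mul by assumption; ring.
Qed.

Section CoefBound.
Variables (a : nat -> oct) (a0 : R).
Hypothesis (Hsr : slice_regular_ball a) (Hpi : maps_into_Pi a) (Ha0 : a O = oreal a0).

Lemma slice_regular_coef_bound_radius (k : nat) (r : R) : (0 < k)%nat -> 0 <= r < 1 ->
  r ^ k * onorm (a k) <= 2 * (1 - a0).
Proof.
  intros Hk Hr.
  destruct (exists_unit_imaginary_Re (a k)) as (u & Hu0 & Hu1 & Hua).
  assert (Hnu : onorm u = 1) by (rewrite onorm_osq, Hu1; apply sqrt_1).
  set (A := fun m => r ^ m * ocoord (a m) 0).
  set (B := fun m => r ^ m * ocoord (omul u (a m)) 0).
  assert (Hrm : forall m, 0 <= r ^ m) by (intros; apply pow_le; lra).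
  assert (HD : ex_series (fun m => Rabs (A m) + Rabs (B m))).
  { apply (ex_series_le (fun m => Rabs (A m) + Rabs (B m)) (fun m => 2 * (r ^ m * onorm (a m)))).
    - intros m; change (Rabs (Rabs (A m) + Rabs (B m)) <= 2 * (r ^ m * onorm (a m))).
      unfold A, B; rewrite Rabs_pos_eq by (generalize (Rabs_pos (r ^ m * ocoord (a m) 0))
        (Rabs_pos (r ^ m * ocoord (omul u (a m)) 0)); lra).
      rewrite !Rabs_mult, (Rabs_pos_eq (r ^ m)) by apply Hrm.
      generalize (Rabs_ocoord_le_onorm (a m) 0) (Rabs_ocoord_le_onorm (omul u (a m)) 0) (Hrm m).
      rewrite onorm_mul, Hnu; nra.
    - apply (ex_series_scal_l _ _ (slice_regular_abs_summable a r Hsr Hr)). }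
  assert (HU : forall t, Series (fun m => harmonic (A m) (B m) m t) <= 1).
  { intros t; unfold A, B; rewrite <- oRe_sfun_oslice_polar by assumption.
    apply Hpi; rewrite onorm_oslice_polar by (assumption || lra); lra. }
  replace (r ^ k * onorm (a k)) with (sqrt (A k ^ 2 + B k ^ 2)).
  - replace a0 with (A O) by (unfold A; rewrite Ha0; simpl; ring).
    apply caratheodory_coef_bound; assumption.
  - rewrite onorm_osq, <- Hua, <- (sqrt_pow2 (r ^ k)) by apply Hrm.
    rewrite <- sqrt_mult by (apply pow2_ge_0 || nra); f_equal; unfold A, B; ring.
Qed.

Lemma slice_regular_coef_bound (k : nat) : (0 < k)%nat -> onorm (a k) <= 2 * (1 - a0).
Proof.
  intros Hk; apply (le_of_forall_pow_mul_le k).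
  - generalize (slice_regular_coef_bound_radius k 0 Hk ltac:(lra)).
    rewrite pow_i by exact Hk; lra.
  - intros r Hr; apply slice_regular_coef_bound_radius; assumption.
Qed.

End CoefBound.

(** * The Bohr radius *)

Definition bohr_majorant (r : R) : R := 2 * r / (1 - r) + 4 * r ^ 2 / ((1 - r) * (1 - r ^ 2)).

Lemma bohr_majorant_sub1 (r : R) : 0 <= r < 1 ->
  bohr_majorant r - 1 = - (3 * r ^ 3 - 5 * r ^ 2 - 3 * r + 1) / ((1 - r) * (1 - r ^ 2)).
Proof. intros Hr; unfold bohr_majorant; field; split; nra. Qed.

Lemma bohr_cubic_factor (Rs r : R) : 0 < Rs < 1 -> 0 <= r < 1 ->
  3 * Rs ^ 3 - 5 * Rs ^ 2 - 3 * Rs + 1 = 0 ->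
  exists h, h < 0 /\ 3 * r ^ 3 - 5 * r ^ 2 - 3 * r + 1 = (r - Rs) * h.
Proof.
  intros HRs Hr Hroot; exists (3 * (r ^ 2 + r * Rs + Rs ^ 2) - 5 * (r + Rs) - 3); split; [nra|].
  apply Rminus_diag_uniq; rewrite <- Hroot; ring.
Qed.

Lemma bohr_majorant_le1 (Rs r : R) : 0 < Rs < 1 -> 3 * Rs ^ 3 - 5 * Rs ^ 2 - 3 * Rs + 1 = 0 ->
  0 <= r <= Rs -> bohr_majorant r <= 1.
Proof.
  intros HRs Hroot Hr.
  destruct (bohr_cubic_factor Rs r HRs ltac:(lra) Hroot) as (h & Hh & Hcubic).
  assert (Hden : 0 < (1 - r) * (1 - r ^ 2)) by (apply Rmult_lt_0_compat; nra).
  assert (Hinv : 0 < / ((1 - r) * (1 - r ^ 2))) by (apply Rinv_0_lt_compat, Hden).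
  assert (0 <= (Rs - r) * - h) by (apply Rmult_le_pos; lra).
  apply Rminus_le; rewrite bohr_majorant_sub1, Hcubic by lra; unfold Rdiv; nra.
Qed.

Lemma bohr_majorant_gt1 (Rs r : R) : 0 < Rs < 1 -> 3 * Rs ^ 3 - 5 * Rs ^ 2 - 3 * Rs + 1 = 0 ->
  Rs < r < 1 -> 1 < bohr_majorant r.
Proof.
  intros HRs Hroot Hr.
  destruct (bohr_cubic_factor Rs r HRs ltac:(lra) Hroot) as (h & Hh & Hcubic).
  assert (Hden : 0 < (1 - r) * (1 - r ^ 2)) by (apply Rmult_lt_0_compat; nra).
  assert (Hinv : 0 < / ((1 - r) * (1 - r ^ 2))) by (apply Rinv_0_lt_compat, Hden).
  assert (0 < (r - Rs) * - h) by (apply Rmult_lt_0_compat; lra).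
  apply Rminus_gt; rewrite bohr_majorant_sub1, Hcubic by lra; unfold Rdiv; nra.
Qed.

Lemma sum_geom_le (q : R) (N : nat) : 0 <= q < 1 -> sum_f_R0 (fun i => q ^ i) N <= 1 / (1 - q).
Proof.
  intros Hq; rewrite tech3 by lra; apply Rmult_le_compat_r.
  - apply Rlt_le, Rinv_0_lt_compat; lra.
  - generalize (pow_le q (S N) (proj1 Hq)); lra.
Qed.

Lemma sum_pow_mul_le (c : nat -> R) (M r : R) (N : nat) : 0 <= r < 1 ->
  (forall k, (0 < k)%nat -> 0 <= c k <= M) ->
  sum_f_R0 (fun k => r ^ k * c k) N <= c O + M * (r / (1 - r)).
Proof.
  intros Hr Hc.
  assert (HM : 0 <= M) by (destruct (Hc 1%nat); lia || lra).
  assert (Hgeom : 0 <= M * (r / (1 - r))) by (apply Rmult_le_pos; [|apply Rdiv_le_0_compat]; lra).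
  destruct N as [|N]; [simpl; lra|].
  rewrite decomp_sum by lia; simpl pred; rewrite Rmult_1_l; apply Rplus_le_compat_l.
  apply Rle_trans with (sum_f_R0 (fun i => M * r * r ^ i) N).
  - apply sum_Rle; intros i _; destruct (Hc (S i)) as [Hc0 HcM]; [lia|].
    assert (0 <= r * r ^ i) by (apply Rmult_le_pos; [lra | apply pow_le; lra]).
    simpl; nra.
  - rewrite sum_f_R0_scal_l; replace (M * (r / (1 - r))) with (M * r * (1 / (1 - r))) by (field; lra).
    apply Rmult_le_compat_l; [nra | apply sum_geom_le; lra].
Qed.

Lemma sum_sq_pow_mul_le (c : nat -> R) (M r : R) (N : nat) : 0 <= r < 1 ->
  (forall k, (0 < k)%nat -> 0 <= c k <= M) ->
  sum_f_R0 (fun k => (r ^ S k * c (S k)) ^ 2) N <= M ^ 2 * (r ^ 2 / (1 - r ^ 2)).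
Proof.
  intros Hr Hc.
  apply Rle_trans with (sum_f_R0 (fun i => M ^ 2 * r ^ 2 * (r ^ 2) ^ i) N).
  - apply sum_Rle; intros i _; destruct (Hc (S i)) as [Hc0 HcM]; [lia|].
    rewrite <- pow_mult, Nat.mul_comm, pow_mult.
    replace (M ^ 2 * r ^ 2 * (r ^ i) ^ 2) with ((M * r ^ S i) ^ 2) by (simpl; ring).
    apply pow_incr; split; [apply Rmult_le_pos; [apply pow_le; lra | exact Hc0]|].
    rewrite Rmult_comm; apply Rmult_le_compat_r; [apply pow_le; lra | exact HcM].
  - rewrite sum_f_R0_scal_l.
    replace (M ^ 2 * (r ^ 2 / (1 - r ^ 2))) with (M ^ 2 * r ^ 2 * (1 / (1 - r ^ 2))) by (field; nra).
    apply Rmult_le_compat_l; [nra | apply sum_geom_le; nra].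
Qed.

Lemma bohr_weight_le (a0 r : R) : 0 <= a0 < 1 -> 0 <= r < 1 ->
  (1 / (1 + a0) + r / (1 - r)) * ((2 * (1 - a0)) ^ 2 * (r ^ 2 / (1 - r ^ 2)))
  <= (1 - a0) * (4 * r ^ 2 / ((1 - r) * (1 - r ^ 2))).
Proof.
  intros Ha Hr.
  assert (Hq : 0 <= r ^ 2 / (1 - r ^ 2)) by (apply Rdiv_le_0_compat; nra).
  assert (HK : 1 / (1 + a0) + r / (1 - r) <= 1 / (1 - r)).
  { assert (1 / (1 + a0) <= 1) by (apply Rmult_le_reg_r with (1 + a0); [lra|]; field_simplify; lra).
    replace (1 / (1 - r)) with (1 + r / (1 - r)) by (field; lra); lra. }
  apply Rle_trans with (1 / (1 - r) * ((2 * (1 - a0)) ^ 2 * (r ^ 2 / (1 - r ^ 2)))).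
  - apply Rmult_le_compat_r; [apply Rmult_le_pos; [apply pow2_ge_0 | exact Hq] | exact HK].
  - replace (1 / (1 - r) * ((2 * (1 - a0)) ^ 2 * (r ^ 2 / (1 - r ^ 2))))
      with ((1 - a0) * (4 * r ^ 2 / ((1 - r) * (1 - r ^ 2))) * (1 - a0)) by (field; nra).
    assert (0 <= (1 - a0) * (4 * r ^ 2 / ((1 - r) * (1 - r ^ 2))))
      by (apply Rmult_le_pos; [lra | apply Rdiv_le_0_compat; [nra | apply Rmult_lt_0_compat; nra]]).
    nra.
Qed.

Lemma Ef_le_bohr_majorant (a : nat -> oct) (a0 : R) (x : oct) :
  a O = oreal a0 -> 0 <= a0 < 1 -> onorm x < 1 ->
  (forall k, (0 < k)%nat -> onorm (a k) <= 2 * (1 - a0)) ->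
  Rbar_le (Ef a a0 x) (a0 + (1 - a0) * bohr_majorant (onorm x)).
Proof.
  intros Ha0 Ha Hx Hcoef.
  set (r := onorm x) in *.
  assert (Hr : 0 <= r < 1) by (split; [apply onorm_ge0 | exact Hx]).
  assert (Hc : forall k, (0 < k)%nat -> 0 <= onorm (a k) <= 2 * (1 - a0))
    by (intros; split; [apply onorm_ge0 | auto]).
  assert (Hc0 : onorm (a O) = a0) by (rewrite Ha0, onorm_oreal; apply Rabs_pos_eq; lra).
  assert (HK : 0 <= 1 / (1 + a0) + r / (1 - r))
    by (apply Rplus_le_le_0_compat; apply Rdiv_le_0_compat; lra).
  unfold Ef; fold r; rewrite <- Lim_seq_const; apply Lim_seq_le_loc; exists O; intros N _.
  rewrite (sum_eq (fun k => onorm (term a x k)) (fun k => r ^ k * onorm (a k))) by (intros; apply onorm_term).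
  rewrite (sum_eq (fun k => onorm (term a x (S k)) ^ 2)
    (fun k => (r ^ S k * onorm (a (S k))) ^ 2))
    by (intros; rewrite onorm_term; reflexivity).
  generalize (sum_pow_mul_le (fun k => onorm (a k)) _ r N Hr Hc)
    (sum_sq_pow_mul_le (fun k => onorm (a k)) _ r N Hr Hc)
    (bohr_weight_le a0 r Ha Hr); rewrite Hc0; intros H1 H2 Hw.
  unfold bohr_majorant.
  replace (a0 + (1 - a0) * (2 * r / (1 - r) + 4 * r ^ 2 / ((1 - r) * (1 - r ^ 2))))
    with (a0 + 2 * (1 - a0) * (r / (1 - r)) + (1 - a0) * (4 * r ^ 2 / ((1 - r) * (1 - r ^ 2))))
    by (field; repeat split; nra).
  apply Rplus_le_compat; [exact H1|].
  eapply Rle_trans; [apply Rmult_le_compat_l; [exact HK | exact H2] | exact Hw].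
Qed.

(** * Sharpness *)

(* Coefficients of [f(x) = -2 x (1 - x)^-1 = 1 - (1 + x)(1 - x)^-1], the analogue of
   the extremal map onto a half-plane in the complex case. *)
Definition extremal_coef (k : nat) : oct := match k with O => oreal 0 | S _ => oreal (-2) end.

Lemma extremal_slice_regular : slice_regular_ball extremal_coef.
Proof.
  intros x Hx i Hi.
  apply (ex_series_le (fun k => ocoord (term extremal_coef x k) i) (fun k => 2 * onorm x ^ k)).
  - intros k; eapply Rle_trans; [apply Rabs_ocoord_le_onorm|]; rewrite onorm_term.
    assert (onorm (extremal_coef k) <= 2)
      by (destruct k; simpl; rewrite onorm_oreal; [rewrite Rabs_R0 | rewrite Rabs_left]; lra).
    generalize (pow_le (onorm x) k (onorm_ge0 x)); nra.
  - apply (ex_series_scal_l _ (fun k => onorm x ^ k)), ex_series_geom.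
    rewrite Rabs_pos_eq by apply onorm_ge0; exact Hx.
Qed.

(* [x (x y) = (x x) y] by alternativity, and [x x = 2 Re x x - |x|^2]. *)
Lemma omul_quadratic (x y : oct) :
  omul x (omul x y) = oadd (oscal (2 * ocoord x 0) (omul x y)) (oscal (- osq x) y).
Proof. oct_destruct x; oct_destruct y; oct_simpl; f_equal; f_equal; ring. Qed.

Lemma Re_opow_SS (x : oct) (m : nat) :
  ocoord (opow x (S (S m))) 0
  = 2 * ocoord x 0 * ocoord (opow x (S m)) 0 - osq x * ocoord (opow x m) 0.
Proof.
  change (opow x (S (S m))) with (omul x (omul x (opow x m))).
  rewrite omul_quadratic; change (opow x (S m)) with (omul x (opow x m)).
  cbn [ocoord oadd oscal olo ohi q0 qadd]; ring.
Qed.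

Lemma ex_series_Re_opow (x : oct) : onorm x < 1 -> ex_series (fun m => ocoord (opow x m) 0).
Proof.
  intros Hx; apply (ex_series_le (fun m => ocoord (opow x m) 0) (fun k => onorm x ^ k)).
  - intros k; rewrite <- onorm_opow; apply Rabs_ocoord_le_onorm.
  - apply ex_series_geom; rewrite Rabs_pos_eq by apply onorm_ge0; exact Hx.
Qed.

Lemma Series_Re_opow (x : oct) : onorm x < 1 ->
  Series (fun m => ocoord (opow x m) 0) * (1 - 2 * ocoord x 0 + osq x) = 1 - ocoord x 0.
Proof.
  intros Hx.
  set (c := fun m => ocoord (opow x m) 0).
  assert (Hc : ex_series c) by apply ex_series_Re_opow, Hx.
  assert (HcS : ex_series (fun m => c (S m))) by apply (ex_series_incr_1 c), Hc.
  assert (Hc1 : c 1%nat = ocoord x 0) by (unfold c; simpl opow; oct_destruct x; oct_simpl; ring).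
  assert (E1 : Series c = 1 + Series (fun m => c (S m)))
    by (rewrite Series_incr_1 by exact Hc; reflexivity).
  assert (E2 : Series (fun m => c (S m)) = ocoord x 0 + Series (fun m => c (S (S m))))
    by (rewrite (Series_incr_1 (fun m => c (S m))), Hc1 by exact HcS; reflexivity).
  assert (E3 : Series (fun m => c (S (S m)))
               = 2 * ocoord x 0 * Series (fun m => c (S m)) - osq x * Series c).
  { rewrite (Series_ext _ (fun m => 2 * ocoord x 0 * c (S m) - osq x * c m)) by apply Re_opow_SS.
    rewrite Series_minus, !Series_scal_l;
      [reflexivity | apply (ex_series_scal_l _ _ HcS) | apply (ex_series_scal_l _ _ Hc)]. }
  nra.
Qed.

Lemma extremal_maps_into_Pi : maps_into_Pi extremal_coef.
Proof.
  intros x Hx; rewrite oRe_sfun.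
  set (c := fun m => ocoord (opow x m) 0).
  set (al := ocoord x 0); set (q := osq x).
  assert (Hc : ex_series c) by apply ex_series_Re_opow, Hx.
  assert (Hq : q < 1).
  { unfold q; rewrite onorm_osq in Hx; apply Rnot_le_lt; intros H1.
    apply sqrt_le_1_alt in H1; rewrite sqrt_1 in H1; lra. }
  assert (Hal : al ^ 2 <= q) by (unfold al, q; oct_destruct x; oct_simpl; nra).
  assert (HS : Series c * (1 - 2 * al + q) = 1 - al) by apply Series_Re_opow, Hx.
  assert (E : Series c = 1 + Series (fun m => c (S m)))
    by (rewrite Series_incr_1 by exact Hc; reflexivity).
  rewrite (Series_ext _ (fun m => match m with O => 0 | S _ => -2 * c m end))
    by (intros [|m]; unfold term, extremal_coef, c; rewrite omul_oreal_r, ocoord_oscal; ring).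
  assert (HD : 0 < 1 - 2 * al + q) by nra.
  assert (Hhalf : 1 <= 2 * Series c).
  { apply (Rmult_le_reg_r (1 - 2 * al + q)); [exact HD|]; nra. }
  rewrite Series_incr_1, Series_scal_l; [simpl; lra|].
  apply (ex_series_incr_1 (fun m => match m with O => 0 | S _ => -2 * c m end)).
  apply (ex_series_scal_l _ _ (proj1 (ex_series_incr_1 c) Hc)).
Qed.

Lemma is_lim_seq_sum_geom (q : R) : 0 <= q < 1 ->
  is_lim_seq (fun N => sum_f_R0 (fun k => q ^ k) N) (/ (1 - q)).
Proof.
  intros Hq; apply (is_lim_seq_ext (sum_n (fun k => q ^ k))); [intros; apply sum_n_Reals|].
  apply is_series_geom; rewrite Rabs_pos_eq; lra.
Qed.

Lemma Ef_extremal (r : R) : 0 <= r < 1 -> Ef extremal_coef 0 (oreal r) = bohr_majorant r.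
Proof.
  intros Hr.
  assert (Hnx : onorm (oreal r) = r) by (rewrite onorm_oreal; apply Rabs_pos_eq; lra).
  assert (Hterm : forall k, onorm (term extremal_coef (oreal r) (S k)) = 2 * r ^ S k).
  { intros k; rewrite onorm_term, Hnx; simpl extremal_coef; rewrite onorm_oreal, Rabs_left by lra.
    ring. }
  assert (HS1 : forall N, sum_f_R0 (fun k => onorm (term extremal_coef (oreal r) k)) N
                          = 2 * sum_f_R0 (fun k => r ^ k) N - 2).
  { induction N as [|N IH]; simpl sum_f_R0.
    - rewrite onorm_term; simpl; rewrite onorm_oreal, Rabs_R0; ring.
    - rewrite IH, Hterm; simpl; ring. }
  assert (HS2 : forall N, sum_f_R0 (fun k => onorm (term extremal_coef (oreal r) (S k)) ^ 2) N
                          = 4 * r ^ 2 * sum_f_R0 (fun k => (r ^ 2) ^ k) N).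
  { intros N; rewrite <- sum_f_R0_scal_l; apply sum_eq; intros k _.
    rewrite Hterm, <- pow_mult, Nat.mul_comm, pow_mult; simpl; ring. }
  unfold Ef; rewrite Hnx.
  apply is_lim_seq_unique.
  apply (is_lim_seq_ext (fun N => 2 * sum_f_R0 (fun k => r ^ k) N - 2
      + (1 / (1 + 0) + r / (1 - r)) * (4 * r ^ 2 * sum_f_R0 (fun k => (r ^ 2) ^ k) N))).
  { intros N; rewrite HS1, HS2; reflexivity. }
  replace (bohr_majorant r)
    with (2 * / (1 - r) - 2 + (1 / (1 + 0) + r / (1 - r)) * (4 * r ^ 2 * / (1 - r ^ 2)))
    by (unfold bohr_majorant; field; split; nra).
  apply is_lim_seq_plus'; [apply is_lim_seq_minus'|]; try apply is_lim_seq_const;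
    repeat apply is_lim_seq_mult'; try apply is_lim_seq_const;
    apply is_lim_seq_sum_geom; nra.
Qed.

Theorem theorem1p6 (Rs : R) (HRs : 0 < Rs < 1)
  (HRs_root : 3 * Rs ^ 3 - 5 * Rs ^ 2 - 3 * Rs + 1 = 0) :
  (forall (a : nat -> oct) (a0 : R),
      slice_regular_ball a -> maps_into_Pi a ->
      a 0%nat = oreal a0 -> 0 <= a0 < 1 ->
      forall x : oct, onorm x < 1 -> onorm x <= Rs -> Rbar_le (Ef a a0 x) 1)
  /\
  (forall r : R, Rs < r < 1 ->
     exists (a : nat -> oct) (a0 : R),
       slice_regular_ball a /\ maps_into_Pi a /\
       a 0%nat = oreal a0 /\ 0 <= a0 < 1 /\
       exists x : oct, onorm x = r /\ Rbar_lt 1 (Ef a a0 x)).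
Proof.
  split.
  - intros a a0 Hsr Hpi Ha0 Ha x Hx HxRs.
    apply Rbar_le_trans with (a0 + (1 - a0) * bohr_majorant (onorm x)).
    + apply Ef_le_bohr_majorant; try assumption.
      intros k Hk; apply (slice_regular_coef_bound a); assumption.
    + generalize (bohr_majorant_le1 Rs (onorm x) HRs HRs_root (conj (onorm_ge0 x) HxRs)).
      simpl; nra.
  - intros r Hr; exists extremal_coef, 0.
    split; [apply extremal_slice_regular|]; split; [apply extremal_maps_into_Pi|].
    split; [reflexivity|]; split; [lra|].
    exists (oreal r); split; [rewrite onorm_oreal; apply Rabs_pos_eq; lra|].
    rewrite Ef_extremal by lra; apply (bohr_majorant_gt1 Rs); assumption.
Qed.
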